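(* Let $M\ge 2$, and let $(\vec n_M^\dagger,\vec P_M^\dagger)$, with $\vec n_M^\dagger\in\mathbb{R}_{>0}^M$, $\vec P_M^\dagger\in\mathbb{R}_{\ge0}^M$, satisfy $\varepsilon_{M-1}(\vec n_{M-1}^\dagger,\vec P_{M-1}^\dagger)>\varepsilon_M(\vec n_M^\dagger,\vec P_M^\dagger)$. Then the function $P\mapsto \varepsilon_M(\vec n_M^\dagger,(P_1^\dagger,\dots,P_{M-1}^\dagger,P))$ has strictly negative derivative at $P=P_M^\dagger$; in particular it is strictly decreasing in a neighborhood of $P_M^\dagger$.
   Context: Fix $B>0$. Let $Q(x)=\frac{1}{\sqrt{2\pi}}\int_x^\infty e^{-t^2/2}\,dt$. For $m\ge 1$, blocklengths $\vec n_m=(n_1,\dots,n_m)$ with $n_i>0$ and powers $\vec P_m=(P_1,\dots,P_m)$ with $P_i\ge 0$ (not all zero), define $$\varepsilon_m(\vec n_m,\vec P_m)=Q\!\left(\frac{\sum_{i=1}^m n_i\ln(1+P_i)-B\ln 2}{\sqrt{\sum_{i=1}^m \frac{n_iP_i(P_i+2)}{(P_i+1)^2}}}\right).$$ *)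

From Stdlib Require Import Reals Lra ClassicalEpsilon.
Open Scope R_scope.

Definition gauss (t : R) : R := exp (- (t ^ 2) / 2).

Lemma gauss_cont : continuity gauss.
Proof.
  unfold gauss.
  apply (continuity_comp (fun t => - (t ^ 2) / 2) exp).
  - intro x. unfold Rdiv.
    apply continuity_pt_mult.
    + apply continuity_pt_opp. apply derivable_continuous_pt.
      apply derivable_pt_pow.
    + apply continuity_pt_const. intros a b; reflexivity.
  - intro x. apply derivable_continuous_pt. apply derivable_pt_exp.
Qed.

(* Riemann integral of gauss on [a,b] (0 if a > b; only used with a <= b). *)
Definition gauss_int (a b : R) : R :=
  match Rle_dec a b with
  | left H => RiemannInt (@continuity_implies_RiemannInt gauss a b H
                            (fun y _ => gauss_cont y))
  | right _ => 0
  end.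

Definition is_gauss_tail (x q : R) : Prop :=
  forall eps, 0 < eps -> exists N, forall b, N <= b -> Rabs (gauss_int x b - q) < eps.

Definition Qfun (x : R) : R :=
  / sqrt (2 * PI) * epsilon (inhabits 0) (fun q => is_gauss_tail x q).

Fixpoint rsum (m : nat) (f : nat -> R) : R :=
  match m with
  | O => 0
  | S k => rsum k f + f k
  end.

(* vectors n_m = (n 0, ..., n (m-1)), P_m = (P 0, ..., P (m-1)) *)
Definition epsm (B : R) (m : nat) (n P : nat -> R) : R :=
  Qfun ((rsum m (fun i => n i * ln (1 + P i)) - B * ln 2)
        / sqrt (rsum m (fun i => n i * P i * (P i + 2) / (P i + 1) ^ 2))).

Definition upd (P : nat -> R) (j : nat) (p : R) : nat -> R :=
  fun i => if Nat.eqb i j then p else P i.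

(* Q is the Gaussian tail, so Q' = -e^{-x^2/2}/sqrt(2 pi) < 0, and as a function
   of the last power p, eps_M is Q (f p) with
     f p = (A + N ln (1 + p)) / sqrt (V + N (1 - (1 + p)^-2)).
   The derivative of f has the sign of
     h p = V + N (1 - (1 + p)^-2) - (A + N ln (1 + p)) / (1 + p)^2.
   The hypothesis eps_{M-1} > eps_M says f 0 < f P_M; squaring it and using
   2 ln y <= y^2 - 1 gives h P_M > 0.  By continuity h stays positive near P_M,
   so f is strictly increasing there and Q o f strictly decreasing. *)

From Stdlib Require Import Reals Lra Psatz Lia ClassicalEpsilon Classical.
From Coquelicot Require Import Coquelicot.
Open Scope R_scope.

Lemma gauss_pos t : 0 < gauss t.
Proof. apply exp_pos. Qed.

Lemma gauss_continuous t : continuous gauss t.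
Proof. apply continuity_pt_filterlim, gauss_cont. Qed.

Lemma ex_RInt_gauss a b : ex_RInt gauss a b.
Proof. apply (@ex_RInt_continuous R_CompleteNormedModule); intros; apply gauss_continuous. Qed.

Definition gauss_prim (x : R) := RInt gauss 0 x.

Lemma RInt_gauss a b : RInt gauss a b = gauss_prim b - gauss_prim a.
Proof.
  unfold gauss_prim. rewrite <- (RInt_Chasles gauss 0 a b) by apply ex_RInt_gauss.
  unfold plus; simpl. lra.
Qed.

Lemma gauss_int_prim a b : a <= b -> gauss_int a b = gauss_prim b - gauss_prim a.
Proof.
  intros Hab. unfold gauss_int. destruct (Rle_dec a b); [|lra].
  rewrite <- RInt_Reals. apply RInt_gauss.
Qed.

Lemma is_derive_gauss_prim x : is_derive gauss_prim x (gauss x).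
Proof.
  apply is_derive_RInt with 0.
  - apply filter_forall. intros; apply RInt_correct, ex_RInt_gauss.
  - apply gauss_continuous.
Qed.

Lemma gauss_prim_lt a b : a < b -> gauss_prim a < gauss_prim b.
Proof.
  intros Hab. apply (incr_function gauss_prim m_infty p_infty gauss); try easy.
  - intros x _ _. apply is_derive_gauss_prim.
  - intros x _ _. apply gauss_pos.
Qed.

Lemma gauss_prim_le a b : a <= b -> gauss_prim a <= gauss_prim b.
Proof. intros [H|H]; [left; apply gauss_prim_lt; exact H | right; rewrite H; reflexivity]. Qed.

(* e^{-t^2/2} <= e^{1/2 - t}, whose integral over [0, b] is below e^{1/2}. *)
Lemma gauss_prim_ub b : gauss_prim b <= exp (1 / 2).
Proof.
  pose proof (exp_pos (1 / 2)).
  destruct (Rle_lt_dec b 0) as [Hb|Hb].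
  - pose proof (gauss_prim_le _ _ Hb).
    assert (gauss_prim 0 = 0) by exact (RInt_point 0 gauss). lra.
  - assert (Hi : is_RInt (fun t => exp (1 / 2 - t)) 0 b (exp (1 / 2) - exp (1 / 2 - b))).
    { replace (exp (1 / 2) - exp (1 / 2 - b))
        with (minus (- exp (1 / 2 - b)) (- exp (1 / 2 - 0))) by (unfold minus, plus, opp; simpl; rewrite Rminus_0_r; ring).
      apply (@is_RInt_derive R_CompleteNormedModule (fun t => - exp (1 / 2 - t))).
      - intros x _. auto_derive; [easy | unfold Rminus; ring].
      - intros x _. apply (ex_derive_continuous (fun t => exp (1 / 2 - t))). auto_derive. easy. }
    assert (gauss_prim b <= exp (1 / 2) - exp (1 / 2 - b)).
    { rewrite <- (is_RInt_unique _ _ _ _ Hi).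
      apply RInt_le; [lra | apply ex_RInt_gauss | eexists; exact Hi |].
      intros t _. unfold gauss.
      assert (E : - t ^ 2 / 2 <= 1 / 2 - t) by (pose proof (pow2_ge_0 (t - 1)); lra).
      destruct E as [E|E]; [left; apply exp_increasing, E | right; rewrite E; reflexivity].
    }
    pose proof (exp_pos (1 / 2 - b)). lra.
Qed.

Lemma gauss_prim_range_bound : bound (fun y => exists b, y = gauss_prim b).
Proof. exists (exp (1 / 2)). intros y [b ->]. apply gauss_prim_ub. Qed.

Lemma gauss_prim_range_inhabited : exists y, exists b, y = gauss_prim b.
Proof. exists (gauss_prim 0), 0. reflexivity. Qed.

Definition gauss_mass : R :=
  proj1_sig (completeness _ gauss_prim_range_bound gauss_prim_range_inhabited).

Lemma gauss_mass_lub : is_lub (fun y => exists b, y = gauss_prim b) gauss_mass.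
Proof. unfold gauss_mass. destruct completeness as [l Hl]. exact Hl. Qed.

Lemma is_gauss_tail_mass x : is_gauss_tail x (gauss_mass - gauss_prim x).
Proof.
  intros eps Heps. destruct gauss_mass_lub as [Hub Hleast].
  assert (Hb0 : exists b0, gauss_mass - eps < gauss_prim b0).
  { apply not_all_not_ex. intros Hnone.
    assert (gauss_mass <= gauss_mass - eps); [|lra].
    apply Hleast. intros y [b ->]. apply Rnot_lt_le, Hnone. }
  destruct Hb0 as [b0 Hb0].
  exists (Rmax x b0). intros b Hb.
  pose proof (Rmax_l x b0). pose proof (Rmax_r x b0).
  rewrite gauss_int_prim by lra.
  assert (gauss_prim b0 <= gauss_prim b) by (apply gauss_prim_le; lra).
  assert (gauss_prim b <= gauss_mass) by (apply Hub; exists b; reflexivity).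
  rewrite Rabs_left1; lra.
Qed.

Lemma is_gauss_tail_is_lim x q : is_gauss_tail x q -> is_lim (gauss_int x) p_infty q.
Proof.
  intros Hq P [eps HP]. destruct (Hq eps (cond_pos eps)) as [N HN].
  exists N. intros b Hb. apply HP, HN. lra.
Qed.

Lemma Qfun_prim x : Qfun x = / sqrt (2 * PI) * (gauss_mass - gauss_prim x).
Proof.
  unfold Qfun. f_equal.
  assert (Hex : exists q, is_gauss_tail x q) by (eexists; apply is_gauss_tail_mass).
  apply Rbar_finite_eq.
  rewrite <- (is_lim_unique _ _ _ (is_gauss_tail_is_lim _ _ (epsilon_spec _ _ Hex))).
  apply is_lim_unique, is_gauss_tail_is_lim, is_gauss_tail_mass.
Qed.

Lemma inv_sqrt_2PI_pos : 0 < / sqrt (2 * PI).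
Proof. apply Rinv_0_lt_compat, sqrt_lt_R0. pose proof PI_RGT_0. lra. Qed.

Lemma is_derive_Qfun x : is_derive Qfun x (- / sqrt (2 * PI) * gauss x).
Proof.
  apply (is_derive_ext (fun y => / sqrt (2 * PI) * (gauss_mass - gauss_prim y))).
  { intros y. symmetry. apply Qfun_prim. }
  replace (- / sqrt (2 * PI) * gauss x) with (/ sqrt (2 * PI) * (0 - gauss x)) by ring.
  apply (is_derive_scal (fun y => gauss_mass - gauss_prim y)).
  apply (is_derive_minus (fun _ => gauss_mass)).
  - apply (is_derive_const (K := R_AbsRing) (V := R_NormedModule)).
  - apply is_derive_gauss_prim.
Qed.

Lemma Qfun_lt x y : Qfun y < Qfun x <-> x < y.
Proof.
  rewrite !Qfun_prim. pose proof inv_sqrt_2PI_pos. split.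
  - intros Hlt. destruct (Rlt_le_dec x y) as [|Hyx]; [assumption|].
    apply gauss_prim_le in Hyx. nra.
  - intros Hxy. apply gauss_prim_lt in Hxy. nra.
Qed.

Lemma ratio_gap_pos A V N a u : 0 < N -> 0 < V -> 0 < a -> 0 < u < 1 -> 2 * a * u <= 1 - u ->
  A / sqrt V < (A + N * a) / sqrt (V + N * (1 - u)) ->
  0 < V + N * (1 - u) - (A + N * a) * u.
Proof.
  intros HN HV Ha Hu Hlog Hlt.
  assert (HW : 0 < V + N * (1 - u)) by nra.
  set (S := A + N * a) in *. set (W := V + N * (1 - u)) in *.
  destruct (Rle_lt_dec S 0) as [HS|HS]; [nra|].
  destruct (Rle_lt_dec A 0) as [HA|HA].
  { assert (S * u <= N * a * u) by (apply Rmult_le_compat_r; unfold S; lra).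
    assert (N * (2 * a * u) <= N * (1 - u)) by (apply Rmult_le_compat_l; lra).
    unfold W. nra. }
  assert (Hsq : A ^ 2 * W < S ^ 2 * V).
  { pose proof (sqrt_lt_R0 _ HV). pose proof (sqrt_lt_R0 _ HW).
    pose proof (sqrt_sqrt _ (Rlt_le _ _ HV)) as EV. pose proof (sqrt_sqrt _ (Rlt_le _ _ HW)) as EW.
    assert (A * sqrt W < S * sqrt V).
    { apply (Rmult_lt_compat_r (sqrt V * sqrt W)) in Hlt; [|nra].
      replace (A / sqrt V * (sqrt V * sqrt W)) with (A * sqrt W) in Hlt by (field; lra).
      replace (S / sqrt W * (sqrt V * sqrt W)) with (S * sqrt V) in Hlt by (field; lra).
      exact Hlt. }
    assert (0 < A * sqrt W) by nra.
    assert (EA : (A * sqrt W) ^ 2 = A ^ 2 * (sqrt W * sqrt W)) by ring.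
    assert (ES : (S * sqrt V) ^ 2 = S ^ 2 * (sqrt V * sqrt V)) by ring.
    rewrite EW in EA. rewrite EV in ES. rewrite <- EA, <- ES. nra. }
  (* Substituting A = S - N a and V = W - N (1 - u) and cancelling S^2 W. *)
  assert (S * (1 - u) < 2 * a * W).
  { assert (EA : A = S - N * a) by (unfold S; ring).
    assert (EV : V = W - N * (1 - u)) by (unfold W; ring).
    rewrite EA, EV in Hsq.
    assert (N * (S ^ 2 * (1 - u) - 2 * a * S * W + N * a ^ 2 * W) < 0) by lra.
    assert (S ^ 2 * (1 - u) - 2 * a * S * W + N * a ^ 2 * W < 0) by nra.
    assert (0 <= N * a ^ 2 * W) by (apply Rmult_le_pos; [apply Rmult_le_pos|]; nra).
    assert (S * (S * (1 - u)) < S * (2 * a * W)) by lra.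
    apply Rmult_lt_reg_l with S; lra. }
  nra.
Qed.

Lemma dispersion_term_nonneg c p : 0 <= c -> 0 <= p -> 0 <= c * p * (p + 2) / (p + 1) ^ 2.
Proof. intros Hc Hp. apply Rle_mult_inv_pos; [nra | apply pow_lt; lra]. Qed.

Lemma dispersion_term_pos c p : 0 < c -> 0 < p -> 0 < c * p * (p + 2) / (p + 1) ^ 2.
Proof. intros Hc Hp. apply Rdiv_lt_0_compat; [nra | apply pow_lt; lra]. Qed.

(* [qarg A V N p] is the argument of Q in eps_M when the last power is p,
   with A = sum_{i<M-1} n_i ln (1 + P_i) - B ln 2, V = sum_{i<M-1} n_i P_i (P_i + 2) / (P_i + 1)^2
   and N = n_M; [qarg A V N 0] is the argument of Q in eps_{M-1}. *)
Section QArgument.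

Variables A V N : R.

Definition margin p := A + N * ln (1 + p).
Definition dispersion p := V + N * p * (p + 2) / (p + 1) ^ 2.
Definition qarg p := margin p / sqrt (dispersion p).
Definition qarg_slope p := dispersion p - margin p / (1 + p) ^ 2.

Lemma qarg_0 : qarg 0 = A / sqrt V.
Proof.
  unfold qarg, margin, dispersion. rewrite Rplus_0_r, ln_1.
  f_equal; [ring | f_equal; field].
Qed.

Lemma dispersion_pos p : 0 < V -> 0 <= N -> 0 <= p -> 0 < dispersion p.
Proof.
  intros HV HN Hp. unfold dispersion.
  pose proof (dispersion_term_nonneg N p HN Hp). lra.
Qed.

Lemma is_derive_margin p : 0 < 1 + p -> is_derive margin p (N / (1 + p)).
Proof. intros Hp. unfold margin. auto_derive; [lra | field; lra]. Qed.

Lemma is_derive_dispersion p : 0 < 1 + p -> is_derive dispersion p (2 * N / (1 + p) ^ 3).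
Proof. intros Hp. unfold dispersion. auto_derive; [nra | field; lra]. Qed.

Lemma is_derive_qarg p : 0 < 1 + p -> 0 < dispersion p ->
  is_derive qarg p (N * qarg_slope p / ((1 + p) * (dispersion p * sqrt (dispersion p)))).
Proof.
  intros Hp Hd.
  pose proof (sqrt_lt_R0 _ Hd) as Hs.
  pose proof (sqrt_sqrt _ (Rlt_le _ _ Hd)) as Es.
  pose proof (is_derive_div margin (fun t => sqrt (dispersion t)) p _ _
    (is_derive_margin p Hp) (is_derive_sqrt dispersion p _ (is_derive_dispersion p Hp) Hd)
    (Rgt_not_eq _ _ Hs)) as H.
  unfold qarg_slope. simpl in H.
  set (s := sqrt (dispersion p)) in *. set (m := margin p) in *. rewrite <- Es.
  replace (N * (s * s - m / (1 + p) ^ 2) / ((1 + p) * (s * s * s)))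
    with ((N / (1 + p) * s - m * (2 * N / (1 + p) ^ 3 / (2 * s))) / (s * (s * 1)))
    by (field; lra).
  exact H.
Qed.

Lemma qarg_derive_pos p : 0 < 1 + p -> 0 < dispersion p -> 0 < N -> 0 < qarg_slope p ->
  0 < N * qarg_slope p / ((1 + p) * (dispersion p * sqrt (dispersion p))).
Proof.
  intros Hp Hd HN Hh. pose proof (sqrt_lt_R0 _ Hd).
  apply Rdiv_lt_0_compat; [nra | repeat apply Rmult_lt_0_compat; assumption].
Qed.

Lemma continuous_qarg_slope p : 0 < 1 + p -> continuous qarg_slope p.
Proof.
  intros Hp. apply (ex_derive_continuous qarg_slope).
  unfold qarg_slope, dispersion, margin. auto_derive. repeat split; nra.
Qed.

Lemma qarg_slope_pos x : 0 < V -> 0 < N -> 0 < x -> qarg 0 < qarg x -> 0 < qarg_slope x.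
Proof.
  intros HV HN Hx Hlt.
  set (u := / (1 + x) ^ 2).
  assert (Hu0 : 0 < u) by (apply Rinv_0_lt_compat, pow_lt; lra).
  assert (Hu1 : u < 1) by (unfold u; rewrite <- Rinv_1; apply Rinv_lt_contravar; nra).
  assert (Ha : 0 < ln (1 + x)) by (rewrite <- ln_1; apply ln_increasing; lra).
  assert (Hlog : 2 * ln (1 + x) * u <= 1 - u).
  { pose proof (exp_ineq1_le (ln ((1 + x) ^ 2))) as Hexp.
    rewrite exp_ln, ln_pow in Hexp by (try apply pow_lt; lra). simpl INR in Hexp.
    replace (1 - u) with (((1 + x) ^ 2 - 1) * u) by (unfold u; field; lra).
    apply Rmult_le_compat_r; lra. }
  assert (Ed : dispersion x = V + N * (1 - u)) by (unfold dispersion, u; field; lra).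
  rewrite qarg_0 in Hlt. unfold qarg in Hlt. rewrite Ed in Hlt.
  unfold qarg_slope. rewrite Ed.
  replace (margin x / (1 + x) ^ 2) with (margin x * u) by (unfold u; field; lra).
  apply (ratio_gap_pos A V N (ln (1 + x)) u); auto.
Qed.

Lemma qarg_locally_increasing x0 : 0 < V -> 0 < N -> 0 < x0 -> 0 < qarg_slope x0 ->
  exists delta, 0 < delta /\ forall x y, Rabs (x - x0) < delta -> Rabs (y - x0) < delta ->
    x < y -> qarg x < qarg y.
Proof.
  intros HV HN Hx0 Hh.
  assert (Hloc : locally x0 (fun p => 0 < p /\ 0 < qarg_slope p)).
  { apply filter_and; [apply (open_gt 0), Hx0|].
    apply (continuous_qarg_slope x0 ltac:(lra) (fun y => 0 < y)), (open_gt 0), Hh. }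
  destruct Hloc as [delta Hdelta].
  assert (Hball : forall p, x0 - delta < p < x0 + delta -> 0 < p /\ 0 < qarg_slope p).
  { intros p Hp. apply Hdelta. change (Rabs (p - x0) < delta). apply Rabs_lt_between'; lra. }
  exists delta. split; [apply cond_pos|].
  intros x y Hx Hy Hxy. apply Rabs_lt_between' in Hx, Hy.
  apply (incr_function qarg (x0 - delta) (x0 + delta)
    (fun p => N * qarg_slope p / ((1 + p) * (dispersion p * sqrt (dispersion p)))));
    simpl; try lra.
  - intros p H1 H2. destruct (Hball p) as [Hp _]; [lra|].
    apply is_derive_qarg; [lra | apply dispersion_pos; lra].
  - intros p H1 H2. destruct (Hball p) as [Hp Hsl]; [lra|].
    apply qarg_derive_pos; [lra | apply dispersion_pos; lra | lra | exact Hsl].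
Qed.

Lemma Qfun_qarg_derive_neg x : 0 < V -> 0 < N -> 0 <= x -> 0 < qarg_slope x ->
  exists l, is_derive (fun p => Qfun (qarg p)) x l /\ l < 0.
Proof.
  intros HV HN Hx Hh.
  assert (Hd : 0 < dispersion x) by (apply dispersion_pos; lra).
  eexists. split.
  - apply (is_derive_comp Qfun); [apply is_derive_Qfun | apply is_derive_qarg; lra].
  - pose proof (qarg_derive_pos x ltac:(lra) Hd HN Hh) as Hq.
    pose proof inv_sqrt_2PI_pos as Hc. pose proof (gauss_pos (qarg x)) as Hg.
    pose proof (Rmult_lt_0_compat _ _ Hq (Rmult_lt_0_compat _ _ Hc Hg)).
    unfold scal; simpl; unfold mult; simpl. lra.
Qed.

End QArgument.

Lemma rsum_ext k f g : (forall i, (i < k)%nat -> f i = g i) -> rsum k f = rsum k g.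
Proof.
  induction k as [|k IH]; intros H; simpl; [reflexivity|].
  rewrite IH, H; [reflexivity | lia | intros; apply H; lia].
Qed.

Lemma rsum_nonneg k f : (forall i, (i < k)%nat -> 0 <= f i) -> 0 <= rsum k f.
Proof.
  induction k as [|k IH]; intros H; simpl; [lra|].
  pose proof (H k ltac:(lia)). assert (0 <= rsum k f) by (apply IH; intros; apply H; lia). lra.
Qed.

Lemma rsum_pos k f j : (forall i, (i < k)%nat -> 0 <= f i) -> (j < k)%nat -> 0 < f j ->
  0 < rsum k f.
Proof.
  induction k as [|k IH]; intros H Hj Hf; simpl; [lia|].
  pose proof (H k ltac:(lia)).
  destruct (Nat.eq_dec j k) as [->|Hne].
  - assert (0 <= rsum k f) by (apply rsum_nonneg; intros; apply H; lia). lra.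
  - assert (0 < rsum k f) by (apply IH; [intros; apply H; lia | lia | exact Hf]). lra.
Qed.

Lemma epsm_S B K n P : epsm B (S K) n P =
  Qfun (qarg (rsum K (fun i => n i * ln (1 + P i)) - B * ln 2)
             (rsum K (fun i => n i * P i * (P i + 2) / (P i + 1) ^ 2)) (n K) (P K)).
Proof. unfold epsm, qarg, margin, dispersion. cbn [rsum]. do 2 f_equal. ring. Qed.

Lemma upd_same P j p : upd P j p j = p.
Proof. unfold upd. rewrite Nat.eqb_refl. reflexivity. Qed.

Lemma upd_other P j p i : i <> j -> upd P j p i = P i.
Proof. intros Hij. unfold upd. rewrite (proj2 (Nat.eqb_neq i j) Hij). reflexivity. Qed.

Lemma epsm_upd_last B K n P p : epsm B (S K) n (upd P K p) =
  Qfun (qarg (rsum K (fun i => n i * ln (1 + P i)) - B * ln 2)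
             (rsum K (fun i => n i * P i * (P i + 2) / (P i + 1) ^ 2)) (n K) p).
Proof.
  rewrite epsm_S, upd_same.
  f_equal; f_equal; [f_equal|]; apply rsum_ext; intros i Hi; rewrite upd_other by lia; reflexivity.
Qed.

Theorem lemma2 (B : R) (M : nat) (n P : nat -> R) :
  0 < B ->
  (2 <= M)%nat ->
  (forall i, (i < M)%nat -> 0 < n i) ->
  (forall i, (i < M)%nat -> 0 <= P i) ->
  (exists i, (i < M - 1)%nat /\ P i <> 0) ->
  epsm B (M - 1) n P > epsm B M n P ->
  (exists l, derivable_pt_lim (fun p => epsm B M n (upd P (M - 1) p)) (P (M - 1)%nat) l
             /\ l < 0)
  /\
  (exists delta, 0 < delta /\
     forall x y, Rabs (x - P (M - 1)%nat) < delta -> Rabs (y - P (M - 1)%nat) < delta ->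
       x < y -> epsm B M n (upd P (M - 1) y) < epsm B M n (upd P (M - 1) x)).
Proof.
  intros _ HM Hn HP [j [Hj HPj]] Heps.
  destruct M as [|K]; [lia|]. replace (S K - 1)%nat with K in * by lia.
  rewrite epsm_S in Heps. unfold epsm in Heps at 1.
  set (A := rsum K (fun i => n i * ln (1 + P i)) - B * ln 2) in *.
  set (V := rsum K (fun i => n i * P i * (P i + 2) / (P i + 1) ^ 2)) in *.
  assert (HN : 0 < n K) by (apply Hn; lia).
  assert (HV : 0 < V).
  { apply (rsum_pos K _ j); [intros i Hi | exact Hj |].
    - apply dispersion_term_nonneg; [apply Rlt_le, Hn | apply HP]; lia.
    - destruct (HP j ltac:(lia)) as [HPj'|E]; [|congruence].
      apply dispersion_term_pos; [apply Hn; lia | exact HPj']. }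
  rewrite <- (qarg_0 A V (n K)) in Heps. apply (proj1 (Qfun_lt _ _)) in Heps.
  assert (HPK : 0 < P K).
  { destruct (HP K ltac:(lia)) as [|E]; [assumption|]. rewrite <- E in Heps. lra. }
  pose proof (qarg_slope_pos A V (n K) (P K) HV HN HPK Heps) as Hslope.
  split.
  - destruct (Qfun_qarg_derive_neg A V (n K) (P K) HV HN (Rlt_le _ _ HPK) Hslope)
      as [l [Hl Hneg]].
    exists l. split; [|exact Hneg].
    apply is_derive_Reals, (is_derive_ext (fun p => Qfun (qarg A V (n K) p))); [|exact Hl].
    intros p. symmetry. apply epsm_upd_last.
  - destruct (qarg_locally_increasing A V (n K) (P K) HV HN HPK Hslope) as [delta [Hdelta Hinc]].
    exists delta. split; [exact Hdelta|].
    intros x y Hx Hy Hxy. rewrite !epsm_upd_last. apply Qfun_lt, Hinc; assumption.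
Qed.
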